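(* Let $E$ be any graph, $K$ a field, and let $(H,S)$ and $(G,T)$ be admissible pairs of $E$ with $(H,S)\leq (G,T)$. Let $v\in B_G$. Then $v^G\in I(H,S)$ (in $L_K(E)$) if and only if $v\in S$ and $v$ emits no edges whose range lies in $G\setminus H$.
   Context: $E$ is a directed graph of arbitrary cardinality with source and range maps $\mathbf{s},\mathbf{r}$; a vertex is an infinite emitter if it emits infinitely many edges. $L_K(E)$ denotes the Leavitt path algebra of $E$ over $K$ (generated by vertices, edges and ghost edges $e^*$ subject to the usual relations (V), (E1), (E2), (CK1), (CK2)). A set $H\subseteq E^0$ is hereditary if every vertex reachable by a path from a vertex of $H$ lies in $H$, and saturated if every vertex $v$ that emits finitely many but at least one edge and has $\mathbf{r}(\mathbf{s}^{-1}(v))\subseteq H$ lies in $H$. For hereditary saturated $H$, the breaking vertices of $H$ form the set $B_H=\{v\in E^0\setminus H: v \text{ is an infinite emitter and } 0<|\mathbf{s}^{-1}(v)\cap\mathbf{r}^{-1}(E^0\setminus H)|<\infty\}$, and for $v\in B_H$ one puts $v^H=v-\sum ee^*$, the sum over $e\in \mathbf{s}^{-1}(v)\cap\mathbf{r}^{-1}(E^0\setminus H)$. An admissible pair is a pair $(H,S)$ with $H$ hereditary and saturated and $S\subseteq B_H$; $I(H,S)$ is the ideal of $L_K(E)$ generated by $H\cup\{v^H: v\in S\}$. Admissible pairs are ordered by $(H,S)\leq (G,T)$ iff $H\subseteq G$ and $S\subseteq G\cup T$. *)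

From HB Require Import structures.
From mathcomp Require Import all_boot all_algebra.
From mathcomp Require Import boolp classical_sets cardinality.
From Stdlib Require Import Relations.
Set Implicit Arguments. Unset Strict Implicit. Unset Printing Implicit Defensive.
Import GRing.Theory.
Local Open Scope ring_scope.
Local Open Scope classical_set_scope.

(* A directed graph E = (V, Ed, s, r) of arbitrary cardinality:
   V, Ed are arbitrary (choice) types, s = source, r = range. *)

Section LPA.
Variables (V Ed : choiceType) (s r : Ed -> V).

Definition emitted (v : V) : set Ed := [set e | s e = v].

Definition infinite_emitter (v : V) : Prop := infinite_set (emitted v).

Definition edge_rel : relation V := fun u w => exists e, s e = u /\ r e = w.
Definition reaches : relation V := clos_refl_trans V edge_rel.

Definition hereditary (H : set V) : Prop :=
  forall u w, H u -> reaches u w -> H w.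

Definition saturated (H : set V) : Prop :=
  forall v, finite_set (emitted v) -> emitted v !=set0 ->
    (forall e, s e = v -> H (r e)) -> H v.

Definition out_edges (H : set V) (v : V) : set Ed :=
  [set e | s e = v /\ ~ H (r e)].

Definition breaking (H : set V) (v : V) : Prop :=
  ~ H v /\ infinite_emitter v /\ finite_set (out_edges H v) /\
  out_edges H v !=set0.

Definition admissible (H S : set V) : Prop :=
  hereditary H /\ saturated H /\ S `<=` breaking H.

Definition pair_le (H S G T : set V) : Prop :=
  H `<=` G /\ S `<=` G `|` T.

Variable K : fieldType.

Definition gen := (V + (Ed + Ed))%type.
Definition gV (v : V) : gen := inl v.
Definition gE (e : Ed) : gen := inr (inl e).
Definition gG (e : Ed) : gen := inr (inr e).   (* ghost edge e^* *)

Definition word := seq gen.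

(* formal K-linear combinations of words, as lists of (coefficient, word) *)
Definition fpoly := seq (K * word).

Definition coef (p : fpoly) (w : word) : K := \sum_(x <- p | x.2 == w) x.1.

Definition feq (p q : fpoly) : Prop := forall w, coef p w = coef q w.

Definition fmul (p q : fpoly) : fpoly :=
  [seq (a.1 * b.1, a.2 ++ b.2) | a <- p, b <- q].
Definition fopp (p : fpoly) : fpoly := [seq (- a.1, a.2) | a <- p].
Definition fsub (p q : fpoly) : fpoly := p ++ fopp q.
Definition fsum (l : seq fpoly) : fpoly := flatten l.
Definition fgen (x : gen) : fpoly := [:: (1, [:: x])].
Definition fvtx (v : V) : fpoly := fgen (gV v).

(* two-sided ideal generated by a set R of elements of the free algebra:
   finite sums  sum_i a_i * r_i * b_i  with r_i in R (a_i, b_i arbitrary;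
   scalars are absorbed into a_i) *)
Definition in_ideal (R : fpoly -> Prop) (p : fpoly) : Prop :=
  exists l : seq (fpoly * fpoly * fpoly),
    (forall t, t \in l -> R t.1.2) /\
    feq p (fsum [seq fmul (fmul t.1.1 t.1.2) t.2 | t <- l]).

Definition sum_eestar (l : seq Ed) : fpoly :=
  fsum [seq fmul (fgen (gE e)) (fgen (gG e)) | e <- l].

Definition enumerates (l : seq Ed) (A : set Ed) : Prop :=
  uniq l /\ forall e, e \in l <-> A e.

(* Leavitt path algebra relations, written as relators (elements which are 0) *)
Inductive LPA_rel : fpoly -> Prop :=
| relV (v w : V) :
    LPA_rel (fsub (fmul (fvtx v) (fvtx w)) (if v == w then fvtx v else [::]))
| relE1s (e : Ed) : LPA_rel (fsub (fmul (fvtx (s e)) (fgen (gE e))) (fgen (gE e)))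
| relE1r (e : Ed) : LPA_rel (fsub (fmul (fgen (gE e)) (fvtx (r e))) (fgen (gE e)))
| relE2r (e : Ed) : LPA_rel (fsub (fmul (fvtx (r e)) (fgen (gG e))) (fgen (gG e)))
| relE2s (e : Ed) : LPA_rel (fsub (fmul (fgen (gG e)) (fvtx (s e))) (fgen (gG e)))
| relCK1 (e f : Ed) :
    LPA_rel (fsub (fmul (fgen (gG e)) (fgen (gE f)))
                  (if e == f then fvtx (r e) else [::]))
| relCK2 (v : V) (l : seq Ed) :
    finite_set (emitted v) -> emitted v !=set0 -> enumerates l (emitted v) ->
    LPA_rel (fsub (fvtx v) (sum_eestar l)).

(* p represents v^H = v - sum_{e in s^-1(v) /\ r(e) notin H} e e^*  *)
Definition is_vH (H : set V) (v : V) (p : fpoly) : Prop :=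
  exists l, enumerates l (out_edges H v) /\ p = fsub (fvtx v) (sum_eestar l).

Definition IHS_gen (H S : set V) (q : fpoly) : Prop :=
  (exists w, H w /\ q = fvtx w) \/ (exists w, S w /\ is_vH H w q).

(* p (an element of the free algebra) maps into the ideal I(H,S) of L_K(E)
   = free algebra / (LPA relations): equivalently p lies in the ideal of the
   free algebra generated by the relators together with (lifts of) the
   generators of I(H,S). *)
Definition in_IHS (H S : set V) (p : fpoly) : Prop :=
  in_ideal (fun q => LPA_rel q \/ IHS_gen H S q) p.

End LPA.

(* Sufficiency is a computation:
   if v is in S and v emits no edge into G \ H, the edges of v leaving H are
   exactly those leaving G, so v^G = v^H, a generator of I(H,S).

   Necessity is proved with a representation of the free algebra that kills
   I(H,S) together with all Leavitt path algebra relations.  A state is an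
   infinite sequence of vertices outside H in which every vertex is either
   followed by one of its edges or "stops"; stopping is forbidden at regular
   vertices and at vertices of S.  Vertices act as projections, an edge e
   prepends e to a state starting at r(e), and a ghost edge e^* removes a
   leading e.  Every element of the ideal in_IHS then acts as zero.  When v
   is not in S, the state sitting at v forever is allowed; when v emits an
   edge e into G \ H, some state starts with e.  On either state v^G acts as
   the identity, so v^G is not in I(H,S). *)
From mathcomp Require Import all_boot all_algebra.
From mathcomp Require Import boolp classical_sets cardinality.
From Stdlib Require Import Relations.
Set Implicit Arguments. Unset Strict Implicit. Unset Printing Implicit Defensive.
Import GRing.Theory.
Local Open Scope ring_scope.

Section FormalSums.
Variables (V Ed : choiceType) (K : fieldType).
Implicit Types (p q : fpoly V Ed K) (h : word V Ed -> K).

Definition fone : fpoly V Ed K := [:: (1, [::])].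

Lemma fmul1l p : fmul fone p = p.
Proof. by rewrite /fmul /= cats0; elim: p => //= -[c w] p ->; rewrite mul1r. Qed.

Lemma fmul1r p : fmul p fone = p.
Proof. by rewrite /fmul; elim: p => //= -[c w] p ->; rewrite mulr1 cats0. Qed.

Lemma in_ideal_gen (R : fpoly V Ed K -> Prop) q : R q -> in_ideal R q.
Proof.
move=> Rq; exists [:: (fone, q, fone)]; split; first by move=> t /[!inE] /eqP ->.
by move=> w; rewrite /fsum /= cats0 fmul1l fmul1r.
Qed.

Definition weigh p h : K := \sum_(a <- p) a.1 * h a.2.

Lemma eq_weigh p h h' : h =1 h' -> weigh p h = weigh p h'.
Proof. by move=> eh; apply: eq_bigr => a _; rewrite eh. Qed.

Lemma weigh0 p : weigh p (fun=> 0) = 0.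
Proof. by rewrite /weigh big1 // => a _; rewrite mulr0. Qed.

Lemma weigh_flatten (l : seq (fpoly V Ed K)) h :
  weigh (flatten l) h = \sum_(p <- l) weigh p h.
Proof. by rewrite /weigh big_flatten. Qed.

Lemma weigh_sub p q h : weigh (fsub p q) h = weigh p h - weigh q h.
Proof.
rewrite /weigh /fsub /fopp big_cat big_map -sumrN.
by congr (_ + _); apply: eq_bigr => a _; rewrite mulNr.
Qed.

Lemma weigh_mul p q h :
  weigh (fmul p q) h = weigh q (fun w2 => weigh p (fun w1 => h (w1 ++ w2))).
Proof.
rewrite /weigh /fmul big_allpairs_dep /= exchange_big /=.
by apply: eq_bigr => b _; rewrite mulr_sumr; apply: eq_bigr => a _; rewrite mulrCA mulrA.
Qed.

Lemma sum_if_eq (T : eqType) (W : seq T) (i : T) (c : K) :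
  uniq W -> \sum_(w <- W) (if w == i then c else 0) = if i \in W then c else 0.
Proof.
move=> uW; rewrite -big_mkcond big_const_seq /=.
have -> : count (fun w => w == i) W = (i \in W) by rewrite -count_uniq_mem.
by case: (i \in W) => /=; rewrite ?addr0.
Qed.

Lemma weigh_coef p h (W : seq (word V Ed)) :
  uniq W -> (forall a, a \in p -> a.2 \in W) ->
  weigh p h = \sum_(w <- W) coef p w * h w.
Proof.
move=> uW pW; under [RHS]eq_bigr => w _ do rewrite /coef mulr_suml big_mkcond.
rewrite exchange_big /= /weigh big_seq [RHS]big_seq.
apply: eq_bigr => a ap.
transitivity (\sum_(w <- W) (if w == a.2 then a.1 * h a.2 else 0)).
  by rewrite sum_if_eq // (pW a ap).
by apply: eq_bigr => w _; rewrite eq_sym; case: eqP => // ->.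
Qed.

Lemma weigh_feq p q h : feq p q -> weigh p h = weigh q h.
Proof.
move=> pq; pose W := undup [seq a.2 | a <- p ++ q].
have uW : uniq W by rewrite undup_uniq.
rewrite (@weigh_coef p h W) => [|//|a ap]; last by rewrite mem_undup map_f // mem_cat ap.
rewrite (@weigh_coef q h W) => [|//|a ap]; last by rewrite mem_undup map_f // mem_cat ap orbT.
by apply: eq_bigr => w _; rewrite pq.
Qed.

End FormalSums.

Section PartialAction.
Variables (V Ed : choiceType) (K : fieldType) (X : Type).
Variable actg : gen V Ed -> X -> option X.

(* Words act letter by letter, the rightmost letter first. *)
Definition act (w : word V Ed) (x : X) : option X :=
  foldr (fun a o => obind (actg a) o) (Some x) w.

Lemma act_cat w1 w2 x : act (w1 ++ w2) x = obind (act w1) (act w2 x).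
Proof.
elim: w1 => [|a w1 IH] /=; first by case: (act w2 x).
by rewrite IH; case: (act w2 x).
Qed.

Definition ext (g : X -> K) (o : option X) : K := if o is Some y then g y else 0.

(* The induced linear (right) action of the free algebra on functions X -> K. *)
Definition Phi (p : fpoly V Ed K) (g : X -> K) (x : X) : K :=
  weigh p (fun w => ext g (act w x)).

Lemma Phi_feq p q g x : feq p q -> Phi p g x = Phi q g x.
Proof. exact: weigh_feq. Qed.

Lemma Phi_flatten l g x : Phi (flatten l) g x = \sum_(p <- l) Phi p g x.
Proof. exact: weigh_flatten. Qed.

Lemma Phi_sub p q g x : Phi (fsub p q) g x = Phi p g x - Phi q g x.
Proof. exact: weigh_sub. Qed.

Lemma Phi_mul p q g x : Phi (fmul p q) g x = Phi q (Phi p g) x.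
Proof.
rewrite /Phi weigh_mul; apply: eq_weigh => w2.
under eq_weigh => w1 do rewrite act_cat.
by case: (act w2 x) => [z|] //=; rewrite weigh0.
Qed.

Variable valid : X -> Prop.
Hypothesis actg_valid : forall a x y, valid x -> actg a x = Some y -> valid y.

Lemma act_valid w x y : valid x -> act w x = Some y -> valid y.
Proof.
elim: w y => [|a w IH] y /= vx; first by case=> <-.
by case E: (act w x) => [z|] //= /actg_valid; apply; apply: IH E.
Qed.

Lemma Phi_vanishing p h x :
  valid x -> (forall y, valid y -> h y = 0) -> Phi p h x = 0.
Proof.
move=> vx h0; rewrite /Phi -(weigh0 p); apply: eq_weigh => w.
by case E: (act w x) => [y|] //=; apply: h0 (act_valid vx E).
Qed.

Definition acts_as_zero (p : fpoly V Ed K) : Prop :=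
  forall g x, valid x -> Phi p g x = 0.

Lemma ideal_acts_as_zero (R : fpoly V Ed K -> Prop) p :
  (forall q, R q -> acts_as_zero q) -> in_ideal R p -> acts_as_zero p.
Proof.
move=> RZ [l [lR pe]] g x vx.
rewrite (Phi_feq _ _ pe) Phi_flatten big_map big1_seq // => t tl.
rewrite Phi_mul; apply: Phi_vanishing vx _ => y vy.
by rewrite Phi_mul; apply: RZ (lR _ tl) _ _ vy.
Qed.

End PartialAction.

Section PathStates.
Variables (V Ed : choiceType) (s r : Ed -> V) (H S : set V).

Definition forced (w : V) : Prop :=
  (finite_set (emitted s w) /\ (emitted s w !=set0)%classic) \/ S w.

(* A state lists vertices x.1 n and, for each, either the edge x.2 n to the
   next vertex or None ("stop"). *)
Definition state : Type := ((nat -> V) * (nat -> option Ed))%type.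

Definition valid_state (x : state) : Prop := forall n, ~ H (x.1 n) /\
  match x.2 n with
  | Some e => s e = x.1 n /\ r e = x.1 n.+1
  | None => ~ forced (x.1 n)
  end.

Definition xcons (e : Ed) (x : state) : state :=
  (fun n => if n is k.+1 then x.1 k else s e,
   fun n => if n is k.+1 then x.2 k else Some e).

Definition xshift (x : state) : state := (fun n => x.1 n.+1, fun n => x.2 n.+1).

Definition path_actg (a : gen V Ed) (x : state) : option state :=
  match a with
  | inl w => if x.1 0 == w then Some x else None
  | inr (inl e) => if x.1 0 == r e then Some (xcons e x) else None
  | inr (inr e) => if x.2 0 == Some e then Some (xshift x) else None
  end.

Lemma shift_cons e x : xshift (xcons e x) = x.
Proof. by case: x. Qed.

Lemma cons_shift x e : valid_state x -> x.2 0 = Some e -> xcons e (xshift x) = x.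
Proof.
case: x => u f vx /= f0; have := vx 0; rewrite /= f0 => -[_ [se _]].
by congr pair; apply: funext => -[|n].
Qed.

Hypothesis hH : hereditary s r H.

Lemma source_notin_H e : ~ H (r e) -> ~ H (s e).
Proof. by move=> nr hs; apply/nr/(hH hs)/rt_step; exists e. Qed.

Lemma valid_cons e x : valid_state x -> x.1 0 = r e -> valid_state (xcons e x).
Proof.
move=> vx xr [|n] /=; last exact: vx.
by split=> //; apply: source_notin_H; rewrite -xr; case: (vx 0).
Qed.

Lemma path_actg_valid a x y :
  valid_state x -> path_actg a x = Some y -> valid_state y.
Proof.
case: a => [w|[e|e]] /= vx.
- by case: eqP => // _ [<-].
- by case: eqP => // xr [<-]; apply: valid_cons.
- by case: eqP => // _ [<-] n; apply: vx.
Qed.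

End PathStates.

Section Vanishing.
Variables (V Ed : choiceType) (K : fieldType) (s r : Ed -> V) (H S : set V).
Hypothesis hH : hereditary s r H.

Notation valid := (valid_state s r H S).
Notation Phi := (@Phi V Ed K (state V Ed) (path_actg s r)).
Notation acts_as_zero := (@acts_as_zero V Ed K _ (path_actg s r) valid).

Lemma Phi_nil g x : Phi [::] g x = 0.
Proof. by rewrite /Phi /weigh big_nil. Qed.

Lemma Phi_fgen a g x : Phi (fgen K a) g x = ext g (path_actg s r a x).
Proof. by rewrite /Phi /weigh big_seq1 /= mul1r. Qed.

Lemma Phi_fvtx w g x : Phi (fvtx Ed K w) g x = if x.1 0 == w then g x else 0.
Proof. by rewrite Phi_fgen /=; case: eqP. Qed.

Lemma Phi_fgen2 a b g x :
  Phi (fmul (fgen K a) (fgen K b)) g x =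
  ext g (obind (path_actg s r a) (path_actg s r b x)).
Proof. by rewrite /Phi /weigh /fmul /= big_seq1 /= !mul1r. Qed.

Definition leaves_by (l : seq Ed) (x : state V Ed) : bool :=
  if x.2 0 is Some e then e \in l else false.

Lemma Phi_sum_eestar l g x : valid x -> uniq l ->
  Phi (sum_eestar V K l) g x = if leaves_by l x then g x else 0.
Proof.
move=> vx ul; rewrite /sum_eestar /fsum Phi_flatten big_map /leaves_by.
under eq_bigr => e _ do rewrite Phi_fgen2 /=.
case E: (x.2 0) => [e0|]; last by rewrite big1 // => e _; rewrite E.
rewrite -sum_if_eq //; apply: eq_bigr => e _.
have [->|ne] := eqVneq e e0; last by rewrite (inj_eq Some_inj) eq_sym (negbTE ne).
rewrite eqxx /=; have := vx 0; rewrite E => -[_ [_ re]].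
by rewrite -re eqxx /= (cons_shift vx E).
Qed.

Lemma vertex_sub_eestar_zero w l : uniq l -> (forall e, e \in l -> s e = w) ->
  (forall x, valid x -> x.1 0 = w -> leaves_by l x) ->
  acts_as_zero (fsub (fvtx Ed K w) (sum_eestar V K l)).
Proof.
move=> ul ls lv g x vx; rewrite Phi_sub Phi_fvtx Phi_sum_eestar //.
case: eqP => [xw|xw]; first by rewrite lv ?subrr.
move: (vx 0); rewrite /leaves_by; case E: (x.2 0) => [e0|]; last by rewrite subrr.
by case: ifP => [/ls se [_ [se0 _]]|]; [case: xw; rewrite -se0 se | rewrite subrr].
Qed.

Lemma LPA_rel_acts_as_zero q : LPA_rel s r q -> acts_as_zero q.
Proof.
case=> [v w|e|e|e|e|e f|w l fin ne [ul le]]; last first.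
- (* (CK2): a state at a regular vertex must leave it *)
  apply: vertex_sub_eestar_zero => // [e /le //|x vx xw].
  move: (vx 0); rewrite /leaves_by; case: (x.2 0) => [e0 [_ [se _]]|[_ []]].
    by apply/le; rewrite /emitted /= se.
  by left; rewrite xw.
all: move=> g x vx; rewrite Phi_sub Phi_fgen2 ?Phi_fgen /=.
-
  case: (e =P f) => [<-|nef]; rewrite ?Phi_fvtx ?Phi_nil.
    by case: (x.1 0 =P r e) => _ /=; rewrite ?eqxx ?shift_cons subrr.
  case: (x.1 0 =P r f) => _ /=; last by rewrite subrr.
  by case: eqP => [[fe]|]; [case: nef|rewrite subrr].
-
  case: (x.1 0 =P s e) => [xs|nxs] /=; first by rewrite subrr.
  case: (x.2 0 =P Some e) => [E|_] /=; last by rewrite subrr.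
  by case: nxs; have := vx 0; rewrite E => -[_ [<- _]].
-
  case: (x.2 0 =P Some e) => [E|_] /=; last by rewrite subrr.
  by have := vx 0; rewrite E => -[_ [_ <-]]; rewrite eqxx subrr.
-
  by case: (x.1 0 =P r e) => [xr|_] /=; rewrite ?xr ?eqxx subrr.
-
  by case: (x.1 0 =P r e) => _ /=; rewrite ?eqxx subrr.
-
  case: (v =P w) => [<-|nvw]; rewrite ?Phi_fvtx ?Phi_nil.
    by case: (x.1 0 =P v) => /= [->|]; rewrite ?eqxx subrr.
  case: (x.1 0 =P w) => /= [xw|]; last by rewrite subrr.
  by case: (x.1 0 =P v) => [xv|]; [case: nvw; rewrite -xv -xw|rewrite subrr].
Qed.

(* The generators of I(H,S) act as zero: valid states avoid H, and a state
   at a vertex of S must leave it along an edge into the complement of H. *)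
Lemma IHS_gen_acts_as_zero q : IHS_gen s r H S q -> acts_as_zero q.
Proof.
case=> [[w [Hw ->]] g x vx | [w [Sw [l [[ul le] ->]]]]].
  by rewrite Phi_fvtx; case: eqP => // xw; have := vx 0; rewrite xw => -[].
apply: vertex_sub_eestar_zero => // [e /le [] //|x vx xw].
move: (vx 0); rewrite /leaves_by; case: (x.2 0) => [e0 [_ [se re]]|[_ []]].
  by apply/le; split; [rewrite se | rewrite re; case: (vx 1)].
by right; rewrite xw.
Qed.

Lemma in_IHS_acts_as_zero p : in_IHS s r H S p -> acts_as_zero p.
Proof.
apply: ideal_acts_as_zero; first exact: path_actg_valid.
by move=> q [/LPA_rel_acts_as_zero | /IHS_gen_acts_as_zero].
Qed.
End Vanishing.

Section ExistenceOfStates.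
Variables (V Ed : choiceType) (s r : Ed -> V) (H S : set V).
Hypothesis satH : saturated s r H.
Hypothesis S_breaking : (S `<=` breaking s r H)%classic.

(* A forced vertex outside H emits an edge into the complement of H:
   for regular vertices by saturation, for vertices of S as breaking vertices. *)
Lemma forced_out_edge w :
  forced s S w -> ~ H w -> exists e, s e = w /\ ~ H (r e).
Proof.
move=> [[fin ne]|Sw] Hw; last by have [_ [_ [_ [e [se nr]]]]] := S_breaking Sw; exists e.
apply: contrapT => nex; apply/Hw/(satH fin ne) => e se.
by apply: contrapT => nr; apply: nex; exists e.
Qed.

Definition next_edge (w : V) : option Ed :=
  if pselect (exists e, s e = w /\ ~ H (r e)) is left P then Some (projT1 (cid P))
  else None.

Lemma next_edgeP w : if next_edge w is Some e then s e = w /\ ~ H (r e)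
  else ~ exists e, s e = w /\ ~ H (r e).
Proof. by rewrite /next_edge; case: pselect => // P; apply: (projT2 (cid P)). Qed.

(* Every vertex outside H starts a valid state: follow next_edge forever. *)
Lemma valid_state_from u : ~ H u -> exists x, valid_state s r H S x /\ x.1 0 = u.
Proof.
move=> Hu; pose step w := if next_edge w is Some e then r e else w.
pose us n := iter n step u.
have nH n : ~ H (us n).
  elim: n => //= n IH; rewrite /step; have := next_edgeP (us n).
  by case: (next_edge _) => // e [].
exists (us, fun n => next_edge (us n)); split=> // n /=; split=> //.
have := next_edgeP (us n); rewrite /us /= /step.
case: (next_edge _) => [e [se _]|nex] //= fw.
by have := forced_out_edge fw (nH n).
Qed.

End ExistenceOfStates.

Section Membership.
Variables (V Ed : choiceType) (K : fieldType) (s r : Ed -> V) (H S : set V).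

(* A valid state at v not leaving by l shows that v - sum_{e in l} e e^* is
   not in I(H,S): this element acts on it as the identity. *)
Lemma not_in_IHS_of_state (hH : hereditary s r H) v l x :
  uniq l -> valid_state s r H S x -> x.1 0 = v -> ~~ leaves_by l x ->
  ~ in_IHS s r H S (fsub (fvtx Ed K v) (sum_eestar V K l)).
Proof.
move=> ul vx xv nl /(in_IHS_acts_as_zero hH) /(_ (fun=> 1) x vx).
rewrite Phi_sub Phi_fvtx (Phi_sum_eestar _ vx) // xv eqxx (negbTE nl) subr0.
by move/eqP; rewrite oner_eq0.
Qed.

Lemma vertex_in_IHS_necessary (G : set V) v l :
  hereditary s r H -> saturated s r H -> (S `<=` breaking s r H)%classic ->
  ~ H v -> infinite_emitter s v -> uniq l -> (forall e, e \in l -> ~ G (r e)) ->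
  in_IHS s r H S (fsub (fvtx Ed K v) (sum_eestar V K l)) ->
  S v /\ ~ (exists e, s e = v /\ G (r e) /\ ~ H (r e)).
Proof.
move=> hH satH SB nHv infv ul lG I; split.
  (* if v is not in S, a state may stay at v forever *)
  apply: contrapT => nSv.
  apply: (not_in_IHS_of_state (x := (fun=> v, fun=> None)) hH ul _ _ _ I) => //.
  by move=> n /=; split=> // -[[fin _]|//]; apply: infv.
(* an edge e into G \ H starts a state that does not leave by l *)
move=> [e [se [Gr nHr]]].
have [y [vy y0]] := valid_state_from satH SB nHr.
apply: (not_in_IHS_of_state hH ul (valid_cons hH vy y0) _ _ I) => //=.
by apply/negP => /lG.
Qed.

Lemma out_edges_agree (G : set V) v : (H `<=` G)%classic ->
  ~ (exists e, s e = v /\ G (r e) /\ ~ H (r e)) -> out_edges s r H v = out_edges s r G v.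
Proof.
move=> HG noe; apply/seteqP; split=> e [se nr]; split=> //.
  by move=> Gr; apply: noe; exists e.
by move/HG.
Qed.

Lemma vertex_in_IHS_sufficient (G : set V) v l : (H `<=` G)%classic -> S v ->
  ~ (exists e, s e = v /\ G (r e) /\ ~ H (r e)) -> enumerates l (out_edges s r G v) ->
  in_IHS s r H S (fsub (fvtx Ed K v) (sum_eestar V K l)).
Proof.
move=> HG Sv noe lG; apply: in_ideal_gen; right; right; exists v; split=> //.
by exists l; rewrite (out_edges_agree HG noe).
Qed.

End Membership.

Theorem lemma3 (K : fieldType) (V Ed : choiceType) (s r : Ed -> V)
  (H S G T : set V) (v : V) (p : fpoly V Ed K) :
  admissible s r H S -> admissible s r G T -> pair_le H S G T ->
  breaking s r G v ->
  is_vH s r G v p ->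
  (in_IHS s r H S p <->
     (S v /\ ~ (exists e : Ed, s e = v /\ G (r e) /\ ~ H (r e)))).
Proof.
move=> [hH [satH SB]] _ [HG _] [nGv [infv _]] [l [lG ->]].
split=> [|[Sv noe]]; last exact: vertex_in_IHS_sufficient HG Sv noe lG.
have [ul le] := lG.
apply: vertex_in_IHS_necessary => //; first by move/HG.
by move=> e /le [].
Qed.
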